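(* Let $(a',b',c',d')\in\mathbb{Z}_{\ge0}^4$, let $t$ be an integer with $1\le t\le q_0-1$, and assume $\lVert(a',b',c',d')\rVert\le t(q+2q_0+1)$. Then there exists a unique $(a,b,c,d)\in\mathbb{Z}_{\ge0}^4$ with $b\in\{0,1\}$ and $\lVert(a,b,c,d)\rVert=\lVert(a',b',c',d')\rVert$.
   Context: $n\ge2$ is an integer, $q_0=2^n$, $q=2q_0^2$, and for $(a,b,c,d)\in\mathbb{Z}_{\ge0}^4$ one sets $\lVert(a,b,c,d)\rVert:=aq+b(q+q_0)+c(q+2q_0)+d(q+2q_0+1)$. *)

From mathcomp Require Import all_boot.

Definition q0 (n : nat) : nat := 2 ^ n.
Definition qq (n : nat) : nat := 2 * (q0 n) ^ 2.

Definition wnorm (n a b c d : nat) : nat :=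
  a * qq n + b * (qq n + q0 n) + c * (qq n + 2 * q0 n)
  + d * (qq n + 2 * q0 n + 1).

From mathcomp Require Import all_boot zify.

(** Writing [R = q0], we have [q = 2 R^2] and

      ||(a,b,c,d)|| = ((a+b+c+d) 2R + (b+2c+2d)) R + d,

    a mixed-radix expansion with digits [d < R] and [b+2c+2d < 2R] as soon
    as [a+b+c+d < R]; the bound on the norm forces [a+b+c+d <= t < R].  So
    the norm determines [d], [b+2c+2d] and [a+b+c+d], hence [(a,b,c,d)] once
    the parity [b] of [b+2c+2d] is fixed.  Existence comes from the relation
    [2(q+q0) = q + (q+2q0)], which trades two units of [b] for one of [a]
    and one of [c]. *)

Lemma radix_inj {r x1 y1 x2 y2} : y1 < r -> y2 < r ->
  x1 * r + y1 = x2 * r + y2 -> x1 = x2 /\ y1 = y2.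
Proof.
move=> y1_lt y2_lt e; have r_gt0 : 0 < r by lia.
have := congr1 (divn^~ r) e; have := congr1 (modn^~ r) e.
by rewrite /= !modnMDl !divnMDl // !modn_small // !divn_small // !addn0.
Qed.

Section Norm.

Variable n : nat.

Local Notation R := (q0 n).

Lemma q0_gt0 : 0 < R.
Proof. by rewrite expn_gt0. Qed.

Lemma qqE : qq n = 2 * R * R.
Proof. by rewrite /qq -mulnA. Qed.

Lemma wnorm_radix a b c d : wnorm n a b c d =
  ((a + b + c + d) * (2 * R) + (b + 2 * c + 2 * d)) * R + d.
Proof. rewrite /wnorm qqE; lia. Qed.

Lemma wnorm_trade a b c d k :
  wnorm n (a + k) b (c + k) d = wnorm n a (b + 2 * k) c d.
Proof. rewrite /wnorm; lia. Qed.

Lemma wnorm_ge_size a b c d : (a + b + c + d) * qq n <= wnorm n a b c d.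
Proof. rewrite /wnorm; nia. Qed.

Lemma wnorm_bound_lt {t} : t < R -> t * (qq n + 2 * R + 1) < t.+1 * qq n.
Proof. rewrite qqE => t_lt; nia. Qed.

Lemma wnorm_size_le {a b c d t} : t < R ->
  wnorm n a b c d <= t * (qq n + 2 * R + 1) -> a + b + c + d <= t.
Proof.
move=> t_lt hN; rewrite -ltnS -(ltn_pmul2r (_ : 0 < qq n)); last first.
  by rewrite qqE !muln_gt0 q0_gt0.
exact: leq_ltn_trans (leq_trans (wnorm_ge_size _ _ _ _) hN) (wnorm_bound_lt t_lt).
Qed.

Lemma wnorm_inj a1 b1 c1 d1 a2 b2 c2 d2 :
  b1 <= 1 -> b2 <= 1 -> a1 + b1 + c1 + d1 < R -> a2 + b2 + c2 + d2 < R ->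
  wnorm n a1 b1 c1 d1 = wnorm n a2 b2 c2 d2 ->
  (a1, b1, c1, d1) = (a2, b2, c2, d2).
Proof.
move=> b1_le b2_le s1_lt s2_lt; rewrite !wnorm_radix => e.
have [{}e d_eq] := radix_inj (ltac:(lia) : d1 < R) (ltac:(lia) : d2 < R) e.
have [s_eq m_eq] := radix_inj (ltac:(lia) : b1 + 2 * c1 + 2 * d1 < 2 * R)
  (ltac:(lia) : b2 + 2 * c2 + 2 * d2 < 2 * R) e.
(* [b] is the parity of [b + 2c + 2d] because [b <= 1]. *)
congr (_, _, _, _); lia.
Qed.

End Norm.

Theorem lemma3p2 (n : nat) (hn : 2 <= n) (a' b' c' d' t : nat)
  (ht1 : 1 <= t) (ht2 : t <= q0 n - 1)
  (hbound : wnorm n a' b' c' d' <= t * (qq n + 2 * q0 n + 1)) :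
  exists! x : nat * nat * nat * nat,
    let '(a, b, c, d) := x in
    b <= 1 /\ wnorm n a b c d = wnorm n a' b' c' d'.
Proof.
have t_lt : t < q0 n by lia.
have size_lt x y z w : wnorm n x y z w = wnorm n a' b' c' d' -> x + y + z + w < q0 n.
  by move=> e; apply: (leq_ltn_trans _ t_lt); apply: (wnorm_size_le n t_lt); rewrite e.
have b'_le : b' %% 2 <= 1 by rewrite -ltnS ltn_pmod.
have norm_eq : wnorm n (a' + b' %/ 2) (b' %% 2) (c' + b' %/ 2) d' = wnorm n a' b' c' d'.
  by rewrite wnorm_trade mulnC addnC -divn_eq.
exists (a' + b' %/ 2, b' %% 2, c' + b' %/ 2, d'); split=> // -[[[a b] c] d] [b_le e].
by apply: wnorm_inj => //; [exact: size_lt | exact: size_lt | rewrite norm_eq e].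
Qed.
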